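(* Let $M$ be a nonempty closed, real algebraic, irreducible subset of $V$ which is $A$-invariant. Then there exists $v\in M$ such that $\mu_{\mathfrak a}(M)=C_I$ with $I=\mathrm{supp}_v$; in particular $\mu_{\mathfrak a}(M)$ is a polyhedral.
   Context: Let $V$ be a finite-dimensional real vector space with a scalar product $\langle\cdot,\cdot\rangle$. Let $G\subset\mathrm{GL}(V)$ be a connected closed subgroup, closed under transpose, with Lie algebra $\mathfrak g$, $G=K\exp(\mathfrak p)$ with $K=G\cap\mathrm O(V)$, $\mathfrak p=\mathfrak g\cap\mathrm{Sym}(V)$. Let $\mathfrak a\subset\mathfrak p$ be an Abelian subalgebra, $A=\exp(\mathfrak a)$, and $\mu_{\mathfrak a}:V\to\mathfrak a^*$, $\mu_{\mathfrak a}(x)(\xi)=\langle\xi x,x\rangle$. Fix an orthonormal basis $v_1,\dots,v_n$ of $V$ simultaneously diagonalizing $\mathfrak a$, with $\xi v_i=\alpha_i(\xi)v_i$, $\alpha_i\in\mathfrak a^*$. For $v=\sum x_iv_i$, $\mathrm{supp}_v=\{i:x_i\neq0\}$; for $I\subset\{1,\dots,n\}$, $C_I=\{\sum_{i\in I}s_i\alpha_i:s_i\ge0\}$. Irreducibility is with respect to the Zariski topology. A polyhedral is an intersection of finitely many closed linear half-spaces. *)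

From HB Require Import structures.
From mathcomp Require Import all_boot all_order all_algebra.
From mathcomp Require Import all_classical all_reals all_analysis.
From mathcomp Require mpoly.
Set Implicit Arguments. Unset Strict Implicit. Unset Printing Implicit Defensive.
Import Order.TTheory GRing.Theory Num.Theory.
Local Open Scope classical_set_scope.
Local Open Scope ring_scope.

(* V is modelled as column vectors 'cV[R]_n with the standard scalar
   product <x, y> = (x^T *m y) 0 0. *)

Definition expmx (R : realType) (n : nat) (A : 'M[R]_n) : 'M[R]_n :=
  lim ((fun N : nat => \sum_(k < N) (k`!%:R)^-1 *: A ^+ k) @ \oo).

(* Real algebraic (= Zariski closed) subsets of V: common zero sets of a
   family of real polynomials in the n coordinates. *)
Definition zariski_closed (R : realType) (n : nat) (M : set 'cV[R]_n) : Prop :=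
  exists S : set (mpoly.mpoly n R),
    M = [set x | forall p, S p -> mpoly.meval (fun i => x i ord0) p = 0].

Definition zariski_irreducible (R : realType) (n : nat) (M : set 'cV[R]_n) : Prop :=
  M !=set0 /\
  forall M1 M2 : set 'cV[R]_n, zariski_closed M1 -> zariski_closed M2 ->
    M `<=` M1 `|` M2 -> M `<=` M1 \/ M `<=` M2.

(* The dual a^* of the subspace a is represented by functions on a. *)
Definition mu_a (R : realType) (n : nat) (a : {vspace 'M[R]_n})
  (x : 'cV[R]_n) : subvs_of a -> R :=
  fun xi => (x^T *m (vsval xi *m x)) ord0 ord0.

(* Coordinates of v in the orthonormal basis given by the columns of P,
   and the support supp_v. *)
Definition coords (R : realType) (n : nat) (P : 'M[R]_n) (v : 'cV[R]_n) :
  'I_n -> R := fun i => (P^T *m v) i ord0.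

Definition supp (R : realType) (n : nat) (P : 'M[R]_n) (v : 'cV[R]_n) :
  {set 'I_n} := [set i | coords P v i != 0].

Definition cone (R : realType) (n : nat) (a : {vspace 'M[R]_n})
  (alpha : 'I_n -> 'M[R]_n -> R) (I : {set 'I_n}) : set (subvs_of a -> R) :=
  [set f | exists s : 'I_n -> R, (forall i, i \in I -> 0 <= s i) /\
     f = (fun xi => \sum_(i in I) s i * alpha i (vsval xi))].

Arguments mu_a {R n} a x _.
Arguments cone {R n} a alpha I _.
Arguments supp {R n} P v.

(* In the orthonormal eigenbasis of a the coordinates of exp(xi) x are
   e^{alpha_i(xi)} x_i and mu_a(x) = sum_i x_i^2 alpha_i.  The vanishing ideal of
   the irreducible set M is prime, so the coordinate functions that do not vanish
   on M have a common non-zero point v in M: every x in M has supp x contained in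
   I = supp v, whence mu_a(M) is contained in C_I.  Conversely, for coefficients
   s >= 0 on I, the convex function
     xi |-> sum_i (v_i^2 e^{2 alpha_i(xi)} - 2 s_i alpha_i(xi))
   is bounded below on a; along a minimizing sequence the points exp(xi_k) v stay
   in a compact box, M is closed in the Euclidean topology, and at a cluster point
   c in M the first order condition reads mu_a(c) = sum_i s_i alpha_i. *)

From HB Require Import structures.
From mathcomp Require Import all_boot all_order all_algebra.
From mathcomp Require Import all_classical all_reals all_analysis.
From mathcomp Require Import ring lra.
From mathcomp Require mpoly.
Import -(notations) mpoly.
Set Implicit Arguments. Unset Strict Implicit. Unset Printing Implicit Defensive.
Import Order.TTheory GRing.Theory Num.Theory.
Import numFieldTopology.Exports.
Local Open Scope classical_set_scope.
Local Open Scope ring_scope.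

Lemma exp_sum_stationary (R : realType) n (w a : 'I_n -> R) (b : R) :
  (forall t, \sum_i w i <= \sum_i w i * expR (t * a i) - t * b) ->
  \sum_i w i * a i = b.
Proof.
move=> h_ge_h0.
pose h := \sum_i (fun t => w i * expR (t * a i)) - ( *%R^~ b).
have hE t : h t = \sum_i w i * expR (t * a i) - t * b.
  by rewrite /h !fctE fct_sumE.
have dh : is_derive (0 : R) 1 h (\sum_i w i * a i - b).
  apply: is_derive_eq; rewrite !scaler0 !add0r; congr (_ - _); last exact: mulr1.
  apply: eq_bigr => i _; rewrite mul0r expR0 mul1r add0r.
  by congr (_ * _); rewrite -[RHS]mulr1.
have dh0 : is_derive (0 : R) 1 h 0.
  apply: (@derive1_at_min R h (-1) 1 0) => [|||t _].
  - lra.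
  - by move=> t _; apply: ex_derive.
  - by rewrite in_itv /=; lra.
  - rewrite !hE mul0r subr0.
    under eq_bigr do rewrite mul0r expR0 mulr1.
    exact: h_ge_h0.
apply/eqP; rewrite -subr_eq0.
by case: dh => _ <-; case: dh0 => _ ->.
Qed.

(* When [w = 0] the bound holds because [s = 0] and [2 * s ^+ 2 / 0 = 0]. *)
Lemma exp_sq_coercive (R : realType) (w s t : R) :
  0 <= w -> 0 <= s -> (w = 0 -> s = 0) ->
  w * expR t ^+ 2 / 2 - 2 * s ^+ 2 / w <= w * expR t ^+ 2 - 2 * s * t.
Proof.
move=> w_ge0 s_ge0; have [->|w_neq0 _] := eqVneq w 0.
  by move=> /(_ erefl) ->; rewrite !(mul0r, mulr0, expr0n) subrr.
have w_gt0 : 0 < w by rewrite lt0r w_neq0.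
have wexp_ge0 : 0 <= w * expR t ^+ 2 by rewrite mulr_ge0 ?sqr_ge0.
have quot_ge0 : 0 <= 2 * s ^+ 2 / w by rewrite divr_ge0 ?mulr_ge0 ?sqr_ge0.
have [t_le0|t_gt0] := leP t 0.
  have : 0 <= - (2 * s * t) by rewrite -mulrN mulr_ge0 ?mulr_ge0 ?oppr_ge0.
  lra.
have t_le_expR : t <= expR t by have := expR_ge1Dx t; lra.
have sq_le : w * t ^+ 2 <= w * expR t ^+ 2.
  by rewrite ler_wpM2l ?(ltW w_gt0) // ler_sqr ?nnegrE ?expR_ge0 ?(ltW t_gt0).
have -> : 2 * s ^+ 2 / w = (w * t - 2 * s) ^+ 2 / (2 * w) - w * t ^+ 2 / 2 + 2 * s * t.
  by field; rewrite w_neq0.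
have : 0 <= (w * t - 2 * s) ^+ 2 / (2 * w) by rewrite divr_ge0 ?sqr_ge0 ?mulr_ge0.
lra.
Qed.

Lemma lbounded_minimizing_seq (R : realType) (T : Type) (f : T -> R) (x0 : T) :
  (exists m, forall x, m <= f x) ->
  exists xs : nat -> T, forall k x, f (xs k) <= f x + k.+1%:R^-1.
Proof.
move=> [m f_ge_m].
have lbf : has_inf (range f) by split; [exists (f x0), x0|exists m => _ [x _ <-]].
have near_inf k : exists x, f x < inf (range f) + k.+1%:R^-1.
  have k_gt0 : 0 < k.+1%:R^-1 :> R by rewrite invr_gt0 ltr0Sn.
  have [_ [x _ <-] fx_lt] := inf_adherent k_gt0 lbf.
  by exists x.
have [xs xsP] := choice near_inf; exists xs => k x.
apply/ltW/(lt_le_trans (xsP k)); rewrite lerD2r.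
by apply: ge_inf lbf.2 _ _; exists x.
Qed.

Section OrbitClosure.
Variables (R : realType) (n : nat) (E : lmodType R) (lam : 'I_n -> E -> R).
Hypothesis lamD : forall i, {morph lam i : x y / x + y}.
Hypothesis lamZ : forall i t x, lam i (t *: x) = t * lam i x.
Variables (v : 'rV[R]_n) (s : 'I_n -> R).
Hypothesis s_ge0 : forall i, 0 <= s i.
Hypothesis s_supp : forall i, v 0 i = 0 -> s i = 0.

(* Coordinates are row vectors, for which [rV_compact] gives compact boxes. *)
Definition orbit_pt (xi : E) : 'rV[R]_n := \row_i (expR (lam i xi) * v 0 i).

(* The derivative of [energy] at [xi] in the direction [eta] is twice
   [\sum_i orbit_pt xi 0 i ^+ 2 * lam i eta - \sum_i s i * lam i eta]. *)
Definition energy (xi : E) : R :=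
  \sum_i (orbit_pt xi 0 i ^+ 2 - 2 * s i * lam i xi).

Definition energy_gap (y : 'rV[R]_n) (eta : E) : R :=
  \sum_i (y 0 i ^+ 2 * (expR (lam i eta) ^+ 2 - 1) - 2 * s i * lam i eta).

Lemma energyD xi eta : energy (xi + eta) = energy xi + energy_gap (orbit_pt xi) eta.
Proof.
rewrite /energy /energy_gap -big_split; apply: eq_bigr => i _.
by rewrite /= !mxE lamD expRD; ring.
Qed.

Let C := \sum_i 2 * s i ^+ 2 / v 0 i ^+ 2.

Lemma energy_coercive xi : \sum_i orbit_pt xi 0 i ^+ 2 / 2 - C <= energy xi.
Proof.
have term_lb j : orbit_pt xi 0 j ^+ 2 / 2 - 2 * s j ^+ 2 / v 0 j ^+ 2 <=
    orbit_pt xi 0 j ^+ 2 - 2 * s j * lam j xi.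
  have sq_orbit : orbit_pt xi 0 j ^+ 2 = v 0 j ^+ 2 * expR (lam j xi) ^+ 2.
    by rewrite mxE; ring.
  rewrite sq_orbit; apply: exp_sq_coercive; rewrite ?sqr_ge0 //.
  by move/eqP; rewrite sqrf_eq0 => /eqP; exact: s_supp.
by apply: le_trans (ler_sum _ (fun j _ => term_lb j)); rewrite sumrB.
Qed.

Lemma energy_gap_continuous eta : continuous (energy_gap ^~ eta).
Proof.
apply: continuous_big => [[x y] | i _ y] /=; first exact: add_continuous.
pose g z := z ^+ 2 * (expR (lam i eta) ^+ 2 - 1) - 2 * s i * lam i eta.
apply: (@continuous_comp _ _ _ (fun y : 'rV[R]_n => y 0 i) g); first exact: coord_continuous.
by apply: cvgB; [apply: cvgM; [apply: cvgM|]|]; exact: cvg_id || exact: cvg_cst.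
Qed.

Lemma energy_gap_stationary y :
  (forall eta, 0 <= energy_gap y eta) ->
  forall eta, \sum_i y 0 i ^+ 2 * lam i eta = \sum_i s i * lam i eta.
Proof.
move=> gap_ge0 eta.
have gap_line t : energy_gap y (t *: eta) =
    \sum_i y 0 i ^+ 2 * expR (t * (2 * lam i eta)) -
    t * (2 * \sum_i s i * lam i eta) - \sum_i y 0 i ^+ 2.
  rewrite /energy_gap !mulr_sumr -!sumrB; apply: eq_bigr => i _.
  have -> : t * (2 * lam i eta) = 2%:R * (t * lam i eta) by ring.
  by rewrite lamZ expRM_natl; ring.
have key : \sum_i y 0 i ^+ 2 * (2 * lam i eta) = 2 * \sum_i s i * lam i eta.
  by apply: exp_sum_stationary => t; rewrite -subr_ge0 -gap_line.
apply: (@mulfI _ 2); first by rewrite pnatr_eq0.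
by rewrite -key mulr_sumr; apply: eq_bigr => i _; rewrite mulrCA.
Qed.

Lemma energy_minimizing_seq :
  exists2 xs : nat -> E, forall k xi, energy (xs k) <= energy xi + k.+1%:R^-1 &
    exists B, forall k i, `|orbit_pt (xs k) 0 i| <= B.
Proof.
have sq_half_ge0 xi i : 0 <= orbit_pt xi 0 i ^+ 2 / 2 by rewrite divr_ge0 ?sqr_ge0.
have [xs xs_min] : exists xs : nat -> E,
    forall k xi, energy (xs k) <= energy xi + k.+1%:R^-1.
  apply: (lbounded_minimizing_seq 0); exists (- C) => xi.
  by apply: le_trans (energy_coercive xi); rewrite -[leLHS]add0r lerD2r sumr_ge0.
exists xs => //; exists (2 * (energy 0 + 1 + C) + 1) => k i.
have : orbit_pt (xs k) 0 i ^+ 2 / 2 <= energy 0 + 1 + C.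
  apply: le_trans (_ : energy (xs k) + C <= _).
    rewrite -lerBlDr; apply: le_trans (energy_coercive _); rewrite lerD2r.
    by rewrite (bigD1 i) //= lerDl sumr_ge0.
  rewrite lerD2r; apply: le_trans (xs_min k 0) _; rewrite lerD2l.
  by rewrite invf_le1 ?ler1n ?ltr0n.
rewrite -[orbit_pt _ _ _ ^+ 2]real_normK ?num_real //.
by have := normr_ge0 (orbit_pt (xs k) 0 i); nra.
Qed.

Lemma cluster_energy_gap_ge0 (xs : nat -> E) c :
  (forall k xi, energy (xs k) <= energy xi + k.+1%:R^-1) ->
  cluster ((orbit_pt \o xs) @ \oo) c -> forall eta, 0 <= energy_gap c eta.
Proof.
move=> xs_min; rewrite clusterE => c_cluster eta.
apply/ler_addgt0Pr => e e_gt0; rewrite -lerBlDr sub0r.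
have gap_closed : closed [set y | - e <= energy_gap y eta].
  apply: (@preimage_closed _ _ (energy_gap ^~ eta) [set x | - e <= x]).
    by move=> y _; exact: energy_gap_continuous.
  exact: closed_ge.
suff : closure [set y | - e <= energy_gap y eta] c by move/closure_id: gap_closed => <-.
apply: c_cluster.
have gap_eventually : \forall k \near \oo, - e <= energy_gap (orbit_pt (xs k)) eta.
  near=> k.
  have := xs_min k (xs k + eta); rewrite energyD.
  have : k.+1%:R^-1 < e by near: k; exact: (near_infty_natSinv_lt (PosNum e_gt0)).
  move: (k.+1%:R^-1 : R) => r; lra.
exact: gap_eventually.
Unshelve. all: by end_near.
Qed.

(* [energy] need not attain its infimum (e.g. if [s i = 0 < v 0 i ^+ 2]), hence
   the cluster point of a minimizing sequence of orbit points. *)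
Lemma orbit_closure_moment (K : set 'rV[R]_n) :
  closed K -> (forall xi, K (orbit_pt xi)) ->
  exists2 c, K c & forall eta, \sum_i c 0 i ^+ 2 * lam i eta = \sum_i s i * lam i eta.
Proof.
move=> closedK orbitK; have [xs xs_min [B orbit_bounded]] := energy_minimizing_seq.
pose box := [set y : 'rV[R]_n | forall i, `[- B, B]%classic (y 0 i)].
have box_K_compact : compact (box `&` K).
  apply: compact_closedI closedK.
  by apply: (@rV_compact _ _ (fun=> `[- B, B]%classic)) => i; exact: segment_compact.
have [c [[_ Kc] c_cluster]] :
    (box `&` K) `&` cluster ((orbit_pt \o xs) @ \oo) !=set0.
  apply: box_K_compact.
  have eventually_in : \forall k \near \oo, (box `&` K) (orbit_pt (xs k)).
    apply: nearW => k; split; last exact: orbitK.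
    by move=> i; rewrite /= in_itv /= -ler_norml.
  exact: eventually_in.
exists c => //; apply: energy_gap_stationary.
exact: cluster_energy_gap_ge0 c_cluster.
Qed.

End OrbitClosure.

Section ZariskiTopology.
Variables (R : realType) (n : nat).

Local Notation ev x p := (meval (fun i => x i ord0) p).

Lemma zariski_closed_zeros (p : mpoly n R) :
  zariski_closed [set x : 'cV[R]_n | ev x p = 0].
Proof. by exists [set p]; apply/seteqP; split=> x /= px; [move=> _ ->|exact: px]. Qed.

Lemma zariski_irreducible_nonvanishing (M : set 'cV[R]_n) (ps : seq (mpoly n R)) :
  zariski_irreducible M -> (forall p, p \in ps -> exists2 x, M x & ev x p != 0) ->
  exists2 x, M x & forall p, p \in ps -> ev x p != 0.
Proof.
case=> [[x0 Mx0] irrM]; elim: ps => [|q ps IHps] nonvan; first by exists x0.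
have [x Mx ps_x] : exists2 x, M x & forall p, p \in ps -> ev x p != 0.
  by apply: IHps => p p_ps; apply: nonvan; rewrite inE p_ps orbT.
pose Z p := [set y : 'cV[R]_n | ev y p = 0].
have not_cover : ~ M `<=` Z q `|` Z (\prod_(p <- ps) p).
  move=> /(irrM _ _ (zariski_closed_zeros _) (zariski_closed_zeros _)) [].
  - by have [y My /eqP qy] := nonvan q (mem_head _ _); move/(_ y My).
  - move/(_ x Mx); rewrite /Z /= (big_morph _ (mevalM _) (meval1 _)) => /eqP.
    by apply/negP; rewrite prodf_seq_neq0; apply/allP => p /ps_x.
have [w /not_implyP[Mw /not_orP[/eqP qw /eqP]]] := (existsNP _).2 not_cover.
rewrite (big_morph _ (mevalM _) (meval1 _)) prodf_seq_neq0 => /allP ps_w.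
by exists w => // p; rewrite inE => /predU1P[->|/ps_w].
Qed.

Definition coord_mpoly (P : 'M[R]_n) (j : 'I_n) : mpoly n R :=
  \sum_k P k j *: mpolyX R (mnm1 k).

Lemma meval_coord_mpoly P j (x : 'cV[R]_n) : ev x (coord_mpoly P j) = coords P x j.
Proof.
rewrite /coord_mpoly /coords raddf_sum mxE; apply: eq_bigr => k _.
by rewrite /= mevalZ mevalXU !mxE.
Qed.

Lemma zariski_irreducible_max_supp (P : 'M[R]_n) (M : set 'cV[R]_n) :
  zariski_irreducible M ->
  exists2 v, M v & forall x, M x -> supp P x \subset supp P v.
Proof.
move=> irrM.
pose U := [pred i : 'I_n | `[< exists2 x, M x & coords P x i != 0 >]].
have [|v Mv nonvan] :=
  zariski_irreducible_nonvanishing (ps := [seq coord_mpoly P i | i <- enum U]) irrM.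
  move=> p /mapP[i]; rewrite mem_enum => /asboolP[x Mx Pxi] ->.
  by exists x; rewrite // meval_coord_mpoly.
exists v => // x Mx; apply/fintype.subsetP => i; rewrite !inE => Pxi.
rewrite -meval_coord_mpoly nonvan //; apply/mapP; exists i => //.
by rewrite mem_enum; apply/asboolP; exists x.
Qed.

Lemma continuous_meval (T : topologicalType) (f : 'I_n -> T -> R) (p : mpoly n R) :
  (forall i, continuous (f i)) -> continuous (fun t => meval (fun i => f i t) p).
Proof.
move=> f_cont; under eq_fun do rewrite mevalE.
apply: continuous_big => [[y z] | m _ t]; first exact: add_continuous.
apply: cvgM; first exact: cvg_cst.
apply: continuous_big => [[y z] | i _ {}t]; first exact: mul_continuous.
exact: continuous_comp (f_cont i t) (@exprn_continuous R (m i) (f i t)).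
Qed.

Lemma zariski_closed_preimage (T : topologicalType) (f : T -> 'cV[R]_n)
    (M : set 'cV[R]_n) :
  zariski_closed M -> (forall i, continuous (fun t => f t i ord0)) ->
  closed (f @^-1` M).
Proof.
case=> S -> f_cont.
have -> : f @^-1` [set x | forall p, S p -> ev x p = 0] =
    \bigcap_(p in S) [set t | ev (f t) p = 0].
  by apply/seteqP; split=> t /= ft.
apply: closed_bigI => p _; apply: (@preimage_closed _ _ (fun t => ev (f t) p) [set 0]).
  by move=> t _; exact: continuous_meval.
exact: closed_eq.
Qed.

Lemma continuous_mulmx_tr_entry (P : 'M[R]_n) i :
  continuous (fun c : 'rV[R]_n => (P *m c^T) i 0).
Proof.
have entryE (c : 'rV[R]_n) : (P *m c^T) i 0 = \sum_k P i k * c 0 k.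
  by rewrite mxE; apply: eq_bigr => k _; rewrite mxE.
rewrite (funext entryE).
apply: continuous_big => [[y z] | k _ c]; first exact: add_continuous.
apply: (@continuous_comp _ _ _ (fun c : 'rV[R]_n => c 0 k) ( *%R (P i k))).
  exact: coord_continuous.
by apply: cvgM; [exact: cvg_cst | exact: cvg_id].
Qed.

End ZariskiTopology.

Lemma mulmx_tr_col_sum (R : pzRingType) m n (A : 'M[R]_(m, n)) :
  A *m A^T = \sum_l col l A *m (col l A)^T.
Proof.
apply/matrixP => i j; rewrite summxE !mxE; apply: eq_bigr => l _.
by rewrite !mxE big_ord1 !mxE.
Qed.

Lemma mulmx_exp_eigen (R : comPzRingType) n (A : 'M[R]_n) (u : 'cV[R]_n) c k :
  A *m u = c *: u -> A ^+ k *m u = c ^+ k *: u.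
Proof.
move=> Au; elim: k => [|k IHk]; first by rewrite !expr0 scale1r mul1mx.
by rewrite !exprS -[A * _]/(A *m _) -mulmxA IHk -scalemxAr Au scalerA mulrC.
Qed.

Section Eigenbasis.
Variables (R : realType) (n : nat) (a : {vspace 'M[R]_n}) (P : 'M[R]_n).
Variable alpha : 'I_n -> 'M[R]_n -> R.
Hypothesis PtP : P^T *m P = 1%:M.
Hypothesis eigenP : forall xi i, xi \in a -> xi *m col i P = alpha i xi *: col i P.

Let PPt : P *m P^T = 1%:M := mulmx1C PtP.

Lemma mulmx_eigenbasis xi : xi \in a -> xi *m P = P *m diag_mx (\row_i alpha i xi).
Proof.
move=> xi_a; apply/matrixP => r l; rewrite mul_mx_diag !mxE mulrC.
have /matrixP/(_ r 0) := eigenP l xi_a; rewrite !mxE => <-.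
by apply: eq_bigr => k _; rewrite !mxE.
Qed.

Lemma mu_a_coords x (xi : subvs_of a) :
  mu_a a x xi = \sum_i coords P x i ^+ 2 * alpha i (vsval xi).
Proof.
rewrite /mu_a /coords; have xE : x = P *m (P^T *m x) by rewrite mulmxA PPt mul1mx.
move: (P^T *m x) xE => c ->; rewrite trmx_mul mulmxA -(mulmxA _ P^T) mulmxA.
rewrite -(mulmxA c^T) -(mulmxA P^T) (mulmx_eigenbasis (subvsP xi)) (mulmxA P^T) PtP mul1mx.
rewrite -mulmxA mul_diag_mx !mxE; apply: eq_bigr => i _; rewrite !mxE.
ring.
Qed.

Lemma alpha_rayleigh xi i :
  xi \in a -> alpha i xi = ((col i P)^T *m (xi *m col i P)) 0 0.
Proof.
move=> xi_a; rewrite eigenP // -scalemxAr mxE.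
have /matrixP/(_ i i) := PtP; rewrite !mxE eqxx => col_unit.
rewrite -[LHS]mulr1 -[1 in LHS]col_unit; congr (_ * _).
by apply: eq_bigr => k _; rewrite !mxE.
Qed.

Lemma alpha_vsvalD i : {morph (fun xi : subvs_of a => alpha i (vsval xi)) : x y / x + y}.
Proof.
move=> xi eta /=; rewrite !alpha_rayleigh ?rpredD ?subvsP //.
by rewrite mulmxDl mulmxDr mxE.
Qed.

Lemma alpha_vsvalZ i t (xi : subvs_of a) :
  alpha i (vsval (t *: xi)) = t * alpha i (vsval xi).
Proof.
rewrite /= !alpha_rayleigh ?rpredZ ?subvsP //.
by rewrite -scalemxAl -scalemxAr mxE.
Qed.

Lemma exp_partial_sum xi N : xi \in a ->
  \sum_(k < N) k`!%:R^-1 *: xi ^+ k =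
  \sum_l series (exp_coeff (alpha l xi)) N *: (col l P *m (col l P)^T).
Proof.
move=> xi_a; rewrite -[LHS]mulmx1 -PPt mulmx_tr_col_sum mulmx_sumr.
apply: eq_bigr => l _; rewrite mulmx_suml /series /= big_mkord scaler_suml.
apply: eq_bigr => k _; rewrite -scalemxAl mulmxA (mulmx_exp_eigen _ (eigenP l xi_a)).
by rewrite -scalemxAl scalerA mulrC.
Qed.

Lemma expmx_eigen xi : xi \in a ->
  expmx xi = \sum_l expR (alpha l xi) *: (col l P *m (col l P)^T).
Proof.
move=> xi_a.
have partial_sums_cvg : (fun N => \sum_(k < N) k`!%:R^-1 *: xi ^+ k : 'M[R]_n) @ \oo -->
    (\sum_l expR (alpha l xi) *: (col l P *m (col l P)^T) : 'M[R]_n).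
  under eq_fun do rewrite exp_partial_sum //.
  apply: (@cvg_big 'M[R]_n _ +%R 0 xpredT) => [|l _]; first exact: add_continuous.
  by apply: cvgZr_tmp; exact: is_cvg_series_exp_coeff.
exact: (cvg_lim (@norm_hausdorff _ _) partial_sums_cvg).
Qed.

Lemma coords_expmx xi x i : xi \in a ->
  coords P (expmx xi *m x) i = expR (alpha i xi) * coords P x i.
Proof.
move=> xi_a; have trP_col l : P^T *m col l P = delta_mx l 0.
  by rewrite colE mulmxA PtP mul1mx.
rewrite /coords (expmx_eigen xi_a) mulmx_suml mulmx_sumr summxE (bigD1 i) //=.
rewrite big1 ?addr0 => [|l l_neq_i]; rewrite -!scalemxAl -scalemxAr mxE !mulmxA trP_col.
  rewrite -mulmxA mxE big_ord1 !mxE !eqxx mul1r; congr (_ * _).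
  by apply: eq_bigr => k _; rewrite !mxE.
by rewrite -mulmxA mxE big_ord1 !mxE eq_sym (negbTE l_neq_i) mul0r mulr0.
Qed.

Lemma expmx_mul_coords xi x : xi \in a ->
  expmx xi *m x = P *m (\row_i (expR (alpha i xi) * coords P x i))^T.
Proof.
move=> xi_a; rewrite -[LHS]mul1mx -PPt -mulmxA; congr (P *m _).
by apply/matrixP => i j; rewrite (ord1 j) [RHS]mxE mxE -coords_expmx.
Qed.

Lemma mu_a_in_cone x (I : {set 'I_n}) :
  supp P x \subset I -> cone a alpha I (mu_a a x).
Proof.
move=> supp_x; exists (fun i => coords P x i ^+ 2); split=> [i _|]; first exact: sqr_ge0.
apply/funext => xi; rewrite mu_a_coords (bigID (mem I)) /=.
rewrite [X in _ + X]big1 ?addr0 // => i i_notin_I.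
have : i \notin supp P x by apply: contra i_notin_I; exact: (fintype.subsetP supp_x).
by rewrite inE negbK => /eqP ->; rewrite expr0n mul0r.
Qed.

Lemma cone_sub_mu_a_image (M : set 'cV[R]_n) v :
  zariski_closed M -> (forall xi x, xi \in a -> M x -> M (expmx xi *m x)) -> M v ->
  cone a alpha (supp P v) `<=` [set mu_a a x | x in M].
Proof.
move=> zcM Ainv Mv _ [s [s_ge0 ->]].
pose s' i := if i \in supp P v then s i else 0.
have [||||c Mc moment_c] := @orbit_closure_moment R n (subvs_of a) _
  alpha_vsvalD alpha_vsvalZ (P^T *m v)^T s' _ _ [set c | M (P *m c^T)] _ _.
- by move=> i; rewrite /s'; case: ifP => [/s_ge0|].
- by move=> i; rewrite mxE /s' inE /coords => ->; rewrite eqxx.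
- by apply: zariski_closed_preimage => // i; exact: continuous_mulmx_tr_entry.
- move=> xi; rewrite /= (_ : orbit_pt _ _ xi = \row_i (expR (alpha i (vsval xi)) * coords P v i)).
    by rewrite -expmx_mul_coords ?subvsP //; apply: Ainv; rewrite ?subvsP.
  by apply/rowP => i; rewrite /orbit_pt /coords !mxE.
exists (P *m c^T) => //; apply/funext => xi.
have coords_c i : coords P (P *m c^T) i = c 0 i.
  by rewrite /coords mulmxA PtP mul1mx mxE.
rewrite mu_a_coords; under eq_bigr do rewrite coords_c.
rewrite moment_c [RHS]big_mkcond; apply: eq_bigr => i _.
by rewrite /s'; case: ifP; rewrite ?mul0r.
Qed.

End Eigenbasis.

Unset Implicit Arguments.

Theorem mainTheorem7 (R : realType) (n : nat) (a : {vspace 'M[R]_n})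
    (P : 'M[R]_n) (alpha : 'I_n -> 'M[R]_n -> R) (M : set 'cV[R]_n) :
  (* a is an Abelian subalgebra of symmetric endomorphisms *)
  (forall xi, xi \in a -> xi^T = xi) ->
  (forall xi eta, xi \in a -> eta \in a -> xi *m eta = eta *m xi) ->
  (* the columns v_i of P form an orthonormal basis diagonalizing a,
     with xi v_i = alpha_i(xi) v_i *)
  P^T *m P = 1%:M ->
  (forall xi (i : 'I_n), xi \in a -> xi *m col i P = alpha i xi *: col i P) ->
  (* M nonempty, closed real algebraic, irreducible, A-invariant *)
  M !=set0 ->
  zariski_closed M ->
  zariski_irreducible M ->
  (forall xi x, xi \in a -> M x -> M (expmx xi *m x)) ->
  exists2 v, M v & [set mu_a a x | x in M] = cone a alpha (supp P v).
Proof.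
(* Symmetry and commutativity of a follow from the orthonormal eigenbasis, and
   nonemptiness of M is part of [zariski_irreducible]. *)
move=> _ _ PtP eigenP _ zcM irrM Ainv.
have [v Mv supp_v] := zariski_irreducible_max_supp P irrM.
exists v => //; apply/seteqP; split; last exact: cone_sub_mu_a_image.
by move=> _ [x Mx <-]; exact: mu_a_in_cone (supp_v x Mx).
Qed.
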